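(* Consider the following stochastic system on a time horizon $\{0,\dots,T\}$. The plant evolves as $x^{t+1}=F_t(x^t,v^t)$ with $F_t:\mathbb{R}^n\times\mathbb{R}^m\to\mathbb{R}^n$, where $v^t=b^tu^t$, $u^t\in\mathbb{R}^m$ is the controller's action and $b^t\in\{0,1\}$ is the transmission state of the link. The link regime $s^t$ takes values in the finite set $\mathcal{F}=\{1,\dots,|\mathcal{F}|\}$; at each time $t$ the jammer takes an action $a^t\in\mathcal{A}=\{1,\dots,N\}$, which selects a row-stochastic matrix $P^t(a^t)\in\mathbb{R}^{|\mathcal{F}|\times|\mathcal{F}|}$, and the new regime is drawn according to $\mathrm{Pr}(s^{t+1}=i\mid s^t=j,a^t=a)=P^t_{ji}(a)$ (conditionally on $s^t,a^t$, independently of the rest of the past). Given $s^{t+1}$, the variable $b^t$ is conditionally independent of all previous regimes, of the current and past plant states and of the current and past actions of both players, with $\mathrm{Pr}(b^t=1\mid s^{t+1}=j)=q^t_j\in[0,1]$. Then, given a sequence of controller's and jammer's actions, the joint state-link process $\{(x^t,s^t)\}_{t=0}^T$ is a Markov process: for every $t=0,\dots,T-1$ and all Borel sets $\Lambda\subseteq\mathbb{R}^n$, $S\subseteq\mathcal{F}$, \[ \mathrm{Pr}\big(x^{t+1}\in\Lambda,s^{t+1}\in S\,\big|\,\{(x^\theta,s^\theta),u^\theta,a^\theta\}_{\theta=0}^t\big)=\mathrm{Pr}\big(x^{t+1}\in\Lambda,s^{t+1}\in S\,\big|\,x^t,s^t,u^t,a^t\big). \]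
   Context: The initial plant state $x^0$ and the initial regime $s^0$ are given (deterministic). $P^t_{ji}(a)$ denotes the $(j,i)$ entry of $P^t(a)$. *)

From HB Require Import structures.
From mathcomp Require Import all_boot all_order all_algebra.
From mathcomp Require Import all_classical all_reals all_analysis.
Set Implicit Arguments. Unset Strict Implicit. Unset Printing Implicit Defensive.
Import Order.TTheory GRing.Theory Num.Theory.
Import numFieldNormedType.Exports.
Local Open Scope classical_set_scope.
Local Open Scope ring_scope.

Definition Pr d (T : measurableType d) (R : realType) (P : probability T R)
  (A : set T) : R := fine (P A).

(* elementary conditional probability Pr(A | B) = Pr(A /\ B) / Pr(B)
   (all conditioning events below are discrete and used only when Pr(B) > 0) *)
Definition cPr d (T : measurableType d) (R : realType) (P : probability T R)
  (A B : set T) : R := Pr P (A `&` B) / Pr P B.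

Definition ev (T V : Type) (X : T -> V) (v : V) : set T := [set w | X w = v].

Definition cond_indep d (T : measurableType d) (R : realType) (P : probability T R)
  (A B C : eqType) (X : T -> A) (Y : T -> B) (Z : T -> C) : Prop :=
  forall (x : A) (y : B) (z : C), 0 < Pr P (ev Z z) ->
    cPr P (ev X x `&` ev Y y) (ev Z z) =
    cPr P (ev X x) (ev Z z) * cPr P (ev Y y) (ev Z z).

Fixpoint plant (T : Type) (R : realType) (n m : nat)
  (F : nat -> 'rV[R]_n -> 'rV[R]_m -> 'rV[R]_n) (x0 : 'rV[R]_n)
  (u : nat -> 'rV[R]_m) (b : nat -> T -> bool) (t : nat) (w : T) : 'rV[R]_n :=
  match t with
  | 0 => x0
  | t'.+1 => F t' (plant F x0 u b t' w) ((b t' w)%:R *: u t')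
  end.

Definition borel_rV (R : realType) (n : nat) (L : set 'rV[R]_n) : Prop :=
  (<<s [set U : set 'rV[R]_n | open U] >>) L.

From HB Require Import structures.
From mathcomp Require Import all_boot all_order all_algebra.
From mathcomp Require Import all_classical all_reals all_analysis.
From mathcomp Require Import ring.
Import Order.TTheory GRing.Theory Num.Theory.
Import numFieldNormedType.Exports.
Local Open Scope classical_set_scope.
Local Open Scope ring_scope.

(** Since [x^0] and the controls are deterministic, [x^θ] is a function of
    [b^0, ..., b^(θ-1)]; hence all variables involved take finitely many values
    and conditioning reduces to elementary conditional probabilities, so no
    regularity of [F_t] or of [Λ] is needed.  On [{x^t = ξ}] we have
    [x^(t+1) = F_t(ξ, b^t u^t)], so [{x^(t+1) ∈ Λ, s^(t+1) ∈ S}] is an event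
    about [(b^t, s^(t+1))].  For every event [H] determined by the history
    [(x^θ, s^θ)_(θ ≤ t)] and contained in [{x^t = ξ, s^t = j}], the two
    conditional independence hypotheses give
    [Pr(b^t = c, s^(t+1) = i, H) = Pr(b^t = c | s^(t+1) = i) Pr(s^(t+1) = i | s^t = j) Pr(H)],
    so [Pr(· | H)] depends only on [(ξ, j)].  Take for [H] the full history
    and then the current state. *)

Set Implicit Arguments.
Unset Strict Implicit.
Unset Printing Implicit Defensive.

Lemma eq_map_iota (V : Type) (f g : nat -> V) k :
  [seq f i | i <- iota 0 k] = [seq g i | i <- iota 0 k] ->
  forall i, (i < k)%N -> f i = g i.
Proof. by move/eq_in_map=> fg i ltik; apply: fg; rewrite mem_iota. Qed.

Section FiniteRandomVariables.
Variables (d : measure_display) (T : measurableType d).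

Definition finite_rv (V : eqType) (X : T -> V) : Prop :=
  (exists L : seq V, forall w, X w \in L) /\ forall v, measurable (ev X v).

Definition determined_by (V : Type) (X : T -> V) (H : set T) : Prop :=
  forall w w', X w = X w' -> H w -> H w'.

Lemma determined_by_preimage (V : Type) (X : T -> V) (H : set T) :
  determined_by X H -> exists B : pred V, H = [set w | B (X w)].
Proof.
move=> detH; exists (fun v => `[< exists2 w, H w & X w = v >]).
apply/seteqP; split=> w /=; first by move=> Hw; apply/asboolP; exists w.
by move=> /asboolP[w' Hw' eX]; exact: detH eX Hw'.
Qed.

Lemma measurable_mem (V : eqType) (X : T -> V) (L : seq V) :
  (forall v, measurable (ev X v)) -> measurable [set w | X w \in L].
Proof.
move=> mX; elim: L => [|v L IH].
  by rewrite (_ : [set w | _] = set0) //; apply/seteqP; split.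
rewrite (_ : [set w | _] = ev X v `|` [set w | X w \in L]).
  exact: measurableU.
apply/seteqP; split=> w /=; rewrite in_cons.
  by case/orP=> [/eqP|]; [left|right].
by case=> [->|->]; rewrite ?eqxx ?orbT.
Qed.

Lemma finite_rv_measurable_preimage (V : eqType) (X : T -> V) (B : pred V) :
  finite_rv X -> measurable [set w | B (X w)].
Proof.
move=> [[L XL] mX].
rewrite (_ : [set w | _] = [set w | X w \in [seq v <- L | B v]]).
  exact: measurable_mem.
by apply/seteqP; split=> w /=; rewrite mem_filter XL andbT.
Qed.

Lemma finite_rv_measurable (V : eqType) (X : T -> V) (H : set T) :
  finite_rv X -> determined_by X H -> measurable H.
Proof.
by move=> fX /determined_by_preimage[B ->]; exact: finite_rv_measurable_preimage.
Qed.

Lemma finite_rv_fin (V : finType) (X : T -> V) :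
  (forall v, measurable (ev X v)) -> finite_rv X.
Proof. by split=> //; exists (enum V) => w; rewrite mem_enum. Qed.

Lemma finite_rv_cst (V : eqType) (v : V) : finite_rv (fun _ : T => v).
Proof.
split; first by exists [:: v] => w; rewrite mem_seq1.
move=> y; have [->|neq_vy] := eqVneq v y.
  by rewrite (_ : ev _ _ = setT) //; apply/seteqP; split.
rewrite (_ : ev _ _ = set0) //; apply/seteqP; split=> w //= eq_vy.
by rewrite eq_vy eqxx in neq_vy.
Qed.

Lemma finite_rv_comp (U V : eqType) (f : U -> V) (X : T -> U) :
  finite_rv X -> finite_rv (fun w => f (X w)).
Proof.
move=> fX; split.
  by case: fX => -[L XL] _; exists (map f L) => w; rewrite map_f.
move=> v; rewrite (_ : ev _ _ = [set w | (fun x => f x == v) (X w)]).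
  exact: (finite_rv_measurable_preimage (fun x => f x == v) fX).
by apply/seteqP; split=> w /=; [move->|move/eqP].
Qed.

Lemma finite_rv_pair (U V : eqType) (X : T -> U) (Y : T -> V) :
  finite_rv X -> finite_rv Y -> finite_rv (fun w => (X w, Y w)).
Proof.
move=> [[LX XL] mX] [[LY YL] mY]; split.
  by exists [seq (x, y) | x <- LX, y <- LY] => w; apply: allpairs_f.
case=> x y; rewrite (_ : ev _ _ = ev X x `&` ev Y y).
  exact: measurableI.
by apply/seteqP; split=> w; rewrite /ev /=; case=> -> ->.
Qed.

Lemma finite_rv_map_iota (V : eqType) (X : nat -> T -> V) m k :
  (forall i, finite_rv (X i)) ->
  finite_rv (fun w => [seq X i w | i <- iota m k]).
Proof.
move=> fX; elim: k m => [|k IHk] m /=; first exact: finite_rv_cst.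
exact: finite_rv_comp (fun p : V * seq V => p.1 :: p.2) _
  (finite_rv_pair (fX m) (IHk m.+1)).
Qed.

Lemma finite_rv_plant (R : realType) n m F (x0 : 'rV[R]_n) (u : nat -> 'rV[R]_m)
    (b : nat -> T -> bool) t :
  (forall t, finite_rv (b t)) -> finite_rv (plant F x0 u b t).
Proof.
move=> fb; elim: t => [|t IHt] /=; first exact: finite_rv_cst.
exact: finite_rv_comp
  (fun p : 'rV[R]_n * bool => F t p.1 ((p.2 : nat)%:R *: u t)) _
  (finite_rv_pair IHt (fb t)).
Qed.

Definition history (U V : Type) (X : nat -> T -> U) (Y : nat -> T -> V) t w :=
  ([seq X th w | th <- iota 0 t.+1], [seq Y th w | th <- iota 0 t.+1]).

Lemma finite_rv_history (U V : eqType) (X : nat -> T -> U) (Y : nat -> T -> V) t :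
  (forall th, finite_rv (X th)) -> (forall th, finite_rv (Y th)) ->
  finite_rv (history X Y t).
Proof. by move=> fX fY; apply: finite_rv_pair; apply: finite_rv_map_iota. Qed.

Lemma eq_history (U V : Type) (X : nat -> T -> U) (Y : nat -> T -> V) t w w' th :
  history X Y t w = history X Y t w' -> (th <= t)%N ->
  X th w = X th w' /\ Y th w = Y th w'.
Proof.
move=> ww' le_th; split; [exact: eq_map_iota (congr1 fst ww') _ _|].
exact: eq_map_iota (congr1 snd ww') _ _.
Qed.

Section Probability.
Variables (R : realType) (P : probability T R).

Lemma Pr_ge0 A : 0 <= Pr P A.
Proof. exact/fine_ge0/measure_ge0. Qed.

Lemma le_Pr A B :
  measurable A -> measurable B -> A `<=` B -> Pr P A <= Pr P B.
Proof.
move=> mA mB AB; apply: fine_le; rewrite ?fin_num_measure //.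
by apply: le_measure; rewrite ?inE.
Qed.

Lemma Pr_sub0 A B :
  measurable A -> measurable B -> A `<=` B -> Pr P B = 0 -> Pr P A = 0.
Proof.
by move=> mA mB AB B0; apply/eqP; rewrite eq_le Pr_ge0 andbT -B0 le_Pr.
Qed.

Lemma Pr_setU A B : measurable A -> measurable B -> A `&` B = set0 ->
  Pr P (A `|` B) = Pr P A + Pr P B.
Proof. by move=> mA mB AB; rewrite /Pr measureU // fineD ?fin_num_measure. Qed.

Lemma Pr_setI_mem (V : eqType) (X : T -> V) (E : set T) (L : seq V) :
  measurable E -> (forall v, measurable (ev X v)) -> uniq L ->
  Pr P (E `&` [set w | X w \in L]) = \sum_(v <- L) Pr P (E `&` ev X v).
Proof.
move=> mE mX; elim: L => [_|v L IHL /andP[vL uL]].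
  rewrite big_nil (_ : _ `&` _ = set0) ?/Pr ?measure0 //.
  by rewrite -subset0 => w [].
rewrite big_cons -IHL //.
rewrite (_ : _ `&` _ = (E `&` ev X v) `|` (E `&` [set w | X w \in L])).
  apply: Pr_setU; [exact: measurableI|exact: measurableI (measurable_mem _ mX)|].
  apply/seteqP; split=> w //= [[_ Xw] [_]].
  by rewrite /ev in Xw; rewrite Xw (negbTE vL).
apply/seteqP; split=> w /=.
  by case=> Ew; rewrite in_cons => /orP[/eqP|]; [left|right].
by case=> -[Ew Xw]; split; rewrite // in_cons ?Xw ?eqxx ?orbT.
Qed.

Lemma Pr_setI_preimage (V : eqType) (X : T -> V) (E : set T) (B : pred V)
    (L : seq V) :
  (forall w, X w \in L) -> (forall v, measurable (ev X v)) -> measurable E ->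
  Pr P (E `&` [set w | B (X w)]) = \sum_(v <- undup L | B v) Pr P (E `&` ev X v).
Proof.
move=> XL mX mE; rewrite -big_filter -Pr_setI_mem ?filter_uniq ?undup_uniq //.
congr (Pr P (E `&` _)); apply/seteqP; split=> w /=.
  by move=> BXw; rewrite mem_filter BXw mem_undup XL.
by rewrite mem_filter => /andP[].
Qed.

Lemma Pr_setI_preimage_fin (V : finType) (X : T -> V) (E : set T) (B : pred V) :
  (forall v, measurable (ev X v)) -> measurable E ->
  Pr P (E `&` [set w | B (X w)]) = \sum_(v | B v) Pr P (E `&` ev X v).
Proof.
move=> mX mE; rewrite (@Pr_setI_preimage _ _ _ _ (enum V)) //.
  by rewrite undup_id ?enum_uniq // enumT.
by move=> w; rewrite mem_enum.
Qed.

Lemma cond_indep_preimage (U V W : eqType) (X : T -> U) (Y : T -> V)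
    (Z : T -> W) (B : pred V) x z :
  cond_indep P X Y Z -> finite_rv Y ->
  measurable (ev X x) -> measurable (ev Z z) ->
  Pr P (ev X x `&` ev Z z `&` [set w | B (Y w)]) * Pr P (ev Z z) =
  Pr P (ev X x `&` ev Z z) * Pr P (ev Z z `&` [set w | B (Y w)]).
Proof.
move=> XYZ [[L YL] mY] mX mZ.
have mXZ : measurable (ev X x `&` ev Z z) by exact: measurableI.
have [Z0|Zn0] := eqVneq (Pr P (ev Z z)) 0.
  by rewrite (Pr_sub0 mXZ mZ _ Z0) ?Z0 ?mulr0 ?mul0r //; exact: subIsetr.
rewrite !(Pr_setI_preimage B YL mY) // big_distrl big_distrr /=.
apply: eq_bigr => y _.
have /XYZ : 0 < Pr P (ev Z z) by rewrite lt0r Zn0 Pr_ge0.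
move=> /(_ x y); rewrite /cPr setIAC (setIC (ev Z z)) => XYz.
by rewrite -[in LHS](mulfVK Zn0 (Pr P _)) XYz; field.
Qed.

Section MarkovStep.
Variables (C I : finType) (Bt : T -> C) (S0 S1 : T -> I) (j : I).
Variables (V1 V2 : eqType) (Y1 : T -> V1) (Y2 : T -> V2) (H : set T).
Hypotheses (S1_indep : cond_indep P S1 Y1 S0) (Bt_indep : cond_indep P Bt Y2 S1).
Hypotheses (fY1 : finite_rv Y1) (fY2 : finite_rv Y2).
Hypotheses (H_Y1 : determined_by Y1 H) (H_Y2 : determined_by Y2 H).
Hypothesis H_S0 : H `<=` ev S0 j.
Hypotheses (mBt : forall c, measurable (ev Bt c))
  (mS0 : forall i, measurable (ev S0 i)) (mS1 : forall i, measurable (ev S1 i)).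

Definition step_prob (c : C) (i : I) : R :=
  cPr P (ev Bt c) (ev S1 i) * cPr P (ev S1 i) (ev S0 j).

Lemma Pr_step c i : Pr P (ev Bt c `&` ev S1 i `&` H) = step_prob c i * Pr P H.
Proof.
have mH : measurable H := finite_rv_measurable fY1 H_Y1.
have mBS1 : measurable (ev Bt c `&` ev S1 i) by exact: measurableI.
have [B1 H_B1] := determined_by_preimage H_Y1.
have [B2 H_B2] := determined_by_preimage H_Y2.
have S1_step : Pr P (ev S1 i `&` H) * Pr P (ev S0 j) =
    Pr P (ev S1 i `&` ev S0 j) * Pr P H.
  have := cond_indep_preimage B1 S1_indep fY1 (mS1 i) (mS0 j).
  by rewrite -H_B1 -setIA !(setIidr H_S0).
have Bt_step : Pr P (ev Bt c `&` ev S1 i `&` H) * Pr P (ev S1 i) =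
    Pr P (ev Bt c `&` ev S1 i) * Pr P (ev S1 i `&` H).
  by have := cond_indep_preimage B2 Bt_indep fY2 (mBt c) (mS1 i); rewrite -H_B2.
rewrite /step_prob /cPr.
have [S1_0|S1n0] := eqVneq (Pr P (ev S1 i)) 0.
  rewrite S1_0 invr0 mulr0 !mul0r; apply: (Pr_sub0 _ (mS1 i) _ S1_0).
    exact: measurableI.
  by move=> w [[]].
have [S0_0|S0n0] := eqVneq (Pr P (ev S0 j)) 0.
  have H0 : Pr P H = 0 by exact: Pr_sub0 mH (mS0 j) H_S0 S0_0.
  by rewrite H0 mulr0; apply: (Pr_sub0 _ mH _ H0); [exact: measurableI|].
apply: (mulIf S1n0); rewrite Bt_step; apply: (mulIf S0n0).
by rewrite -[LHS]mulrA S1_step; field; apply/andP.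
Qed.

Lemma cPr_step (good : pred (C * I)) : 0 < Pr P H ->
  cPr P [set w | good (Bt w, S1 w)] H = \sum_(y | good y) step_prob y.1 y.2.
Proof.
move=> PH; have mH : measurable H := finite_rv_measurable fY1 H_Y1.
have mBtS1 := (finite_rv_pair (finite_rv_fin mBt) (finite_rv_fin mS1)).2.
rewrite /cPr setIC (Pr_setI_preimage_fin _ mBtS1 mH) big_distrl /=.
apply: eq_bigr => -[c i] _; rewrite (_ : _ `&` _ = ev Bt c `&` ev S1 i `&` H).
  by rewrite Pr_step mulfK ?gt_eqF.
by rewrite setIC; apply/seteqP; split=> w /=; rewrite /ev /=; case=> [[]] -> -> Hw.
Qed.

End MarkovStep.
End Probability.
End FiniteRandomVariables.

Unset Implicit Arguments.
Theorem proposition1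
  (R : realType) (d : measure_display) (Omega : measurableType d)
  (P : probability Omega R)
  (n m K N Th : nat)
  (F : nat -> 'rV[R]_n -> 'rV[R]_m -> 'rV[R]_n)
  (x0 : 'rV[R]_n) (s0 : 'I_K)
  (u : nat -> 'rV[R]_m)            (* controller's action sequence *)
  (a : nat -> 'I_N)                (* jammer's action sequence *)
  (Pm : nat -> 'I_N -> 'M[R]_K)    (* P^t(a) *)
  (q : nat -> 'I_K -> R)           (* q^t_j *)
  (s : nat -> Omega -> 'I_K)       (* link regime process *)
  (b : nat -> Omega -> bool)       (* transmission state process *)
  (HPm_nonneg : forall t a' j i, 0 <= Pm t a' j i)
  (HPm_row : forall t a' j, \sum_(i < K) Pm t a' j i = 1)
  (Hq : forall t j, 0 <= q t j <= 1)
  (Hs_meas : forall t i, measurable (ev (s t) i))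
  (Hb_meas : forall t c, measurable (ev (b t) c))
  (Hs0 : forall w, s 0%N w = s0)
  (* regime transition *)
  (Hs_trans : forall t, (t < Th)%N -> forall (j i : 'I_K),
      0 < Pr P (ev (s t) j) ->
      cPr P (ev (s t.+1) i) (ev (s t) j) = Pm t (a t) j i)
  (* ... conditionally on s^t, independently of the rest of the past *)
  (Hs_indep : forall t, (t < Th)%N ->
      cond_indep P (s t.+1)
        (fun w => ([seq s th w | th <- iota 0 t.+1],
                   [seq plant F x0 u b th w | th <- iota 0 t.+1],
                   [seq b th w | th <- iota 0 t]))
        (s t))
  (* transmission probability given the new regime *)
  (Hb_prob : forall t, (t < Th)%N -> forall j : 'I_K,
      0 < Pr P (ev (s t.+1) j) ->
      cPr P (ev (b t) true) (ev (s t.+1) j) = q t j)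
  (* b^t cond. independent of previous regimes and current/past plant states *)
  (Hb_indep : forall t, (t < Th)%N ->
      cond_indep P (b t)
        (fun w => ([seq s th w | th <- iota 0 t.+1],
                   [seq plant F x0 u b th w | th <- iota 0 t.+1]))
        (s t.+1)) :
  forall t, (t < Th)%N ->
  forall (Lam : set 'rV[R]_n) (S : set 'I_K), borel_rV Lam ->
  forall (hx : nat -> 'rV[R]_n) (hs : nat -> 'I_K),
    let A := [set w | Lam (plant F x0 u b t.+1 w) /\ S (s t.+1 w)] in
    let Hist := [set w | forall th, (th <= t)%N ->
                   plant F x0 u b th w = hx th /\ s th w = hs th] in
    let Cur := [set w | plant F x0 u b t w = hx t /\ s t w = hs t] in
    0 < Pr P Hist ->
    cPr P A Hist = cPr P A Cur.
Proof.
move=> t Ht Lam S _ hx hs A Hist Cur PHist.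
pose hist := history s (plant F x0 u b) t.
have fb th : finite_rv (b th) := finite_rv_fin (Hb_meas th).
have fhist : finite_rv hist := finite_rv_history t
  (fun th => finite_rv_fin (Hs_meas th)) (fun th => finite_rv_plant F x0 u th fb).
have fhist_b : finite_rv (fun w => (hist w, [seq b th w | th <- iota 0 t]))
  := finite_rv_pair fhist (finite_rv_map_iota 0 t fb).
pose good (y : bool * 'I_K) := `[< Lam (F t (hx t) (y.1%:R *: u t)) /\ S y.2 >].
have cPr_A H : determined_by hist H -> H `<=` Cur -> 0 < Pr P H ->
    cPr P A H = \sum_(y | good y) step_prob P (b t) (s t) (s t.+1) (hs t) y.1 y.2.
  move=> H_hist H_Cur PH.
  have -> : cPr P A H = cPr P [set w | good (b t w, s t.+1 w)] H.
    rewrite /cPr; congr (Pr P _ / _); apply/seteqP.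
    by split=> w [Aw Hw]; split=> //; move: Aw;
      rewrite /A /good /= (H_Cur w Hw).1 => /asboolP.
  apply: (cPr_step (Hs_indep t Ht) (Hb_indep t Ht) fhist_b fhist _ H_hist) => //.
  - by move=> w w' /(congr1 fst) /H_hist.
  - by move=> w /H_Cur[].
have Hist_hist : determined_by hist Hist.
  move=> w w' ww' Hw th le_th.
  by have [<- <-] := eq_history ww' le_th; exact: Hw.
have Cur_hist : determined_by hist Cur.
  by move=> w w' ww'; rewrite /Cur /=; have [<- <-] := eq_history ww' (leqnn t).
have Hist_Cur : Hist `<=` Cur by move=> w /(_ t (leqnn t)).
have PCur : 0 < Pr P Cur.
  apply: lt_le_trans PHist (le_Pr P _ _ Hist_Cur);
    exact: finite_rv_measurable fhist _.
by rewrite (cPr_A _ Hist_hist Hist_Cur PHist) (cPr_A _ Cur_hist (fun _ => id) PCur).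
Qed.
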